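(* Let $d$ be a metric on $\mathbb R^n$ induced by a norm, $\delta>0$. Let $\{\mathcal D^n(\delta);\tilde w_1,\dots,\tilde w_N;p_1,\dots,p_N\}$ be a DIFS in which each $\tilde w_i$ is the $\delta$-roundoff of a contraction $w_i$ on $(\mathbb R^n,d)$ with contractivity factor $\lambda_i$, and let $\lambda_{max}=\max_i\lambda_i$. Let $\{\mathbb R^n;w_1,\dots,w_N;q_1,\dots,q_N\}$ be an IFS with constant probabilities $q_i\in(0,1]$, $\sum_iq_i=1$. Let $\tilde x_0\in\mathcal D^n(\delta)$, and let $X=\{X_k\}$ with $X_0=\tilde x_0$ and $\tilde X=\{\tilde X_k\}$ with $\tilde X_0=\tilde x_0$ be the Markov chains generated by the IFS and the DIFS respectively (at each step a map index is chosen according to $(q_i)$, resp. $(p_i(\tilde X_{k-1}))$, and the chosen map is applied). Then for any orbit $\{x_k=w_{i_k}(x_{k-1})\}$ of $X$ (respectively any orbit $\{\tilde x_k=\tilde w_{i_k}(\tilde x_{k-1})\}$ of $\tilde X$) there exists an orbit $\{\tilde x_k=\tilde w_{i_k}(\tilde x_{k-1})\}$ of $\tilde X$ (respectively an orbit $\{x_k=w_{i_k}(x_{k-1})\}$ of $X$), with the same index sequence $(i_k)$ and $x_0=\tilde x_0$, such that for all $k\in\mathbb N$, $$d(x_k,\tilde x_k)\le\theta(1-\lambda_{max})^{-1}.$$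
   Context: For $m\in\mathbb Z^n$, $C_\delta(m)=\prod_{j=1}^n[(m_j-\tfrac12)\delta,(m_j+\tfrac12)\delta)$; $\mathcal D^n(\delta)=\{\delta m:m\in\mathbb Z^n\}\subset\mathbb R^n$. The $\delta$-roundoff of $x\in\mathbb R^n$ is $\tilde x=\delta m$ where $x\in C_\delta(m)$; the $\delta$-roundoff of $w$ is $\tilde w(\tilde x)=\widetilde{w(\tilde x)}$ on $\mathcal D^n(\delta)$. $\theta:=\tfrac12\operatorname{diam}_d(C_\delta(0))$. A DIFS $\{S;\tilde w_1,\dots,\tilde w_N;p_1,\dots,p_N\}$ consists of $S\subset\mathcal D^n(\delta)$, maps $\tilde w_i:S\to S$ and functions $p_i:S\to(0,1]$ with $\sum_ip_i(\tilde x)=1$ for every $\tilde x$. *)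

From HB Require Import structures.
From mathcomp Require Import all_boot all_order all_algebra.
From mathcomp Require Import all_classical all_reals.
Set Implicit Arguments. Unset Strict Implicit. Unset Printing Implicit Defensive.
Import Order.TTheory GRing.Theory Num.Theory.
Local Open Scope ring_scope.
Local Open Scope classical_set_scope.

Definition is_norm (R : realType) (n : nat) (nrm : 'rV[R]_n -> R) : Prop :=
  [/\ forall x, nrm x = 0 -> x = 0,
      forall (a : R) x, nrm (a *: x) = `|a| * nrm x
    & forall x y, nrm (x + y) <= nrm x + nrm y].

Definition dist (R : realType) (n : nat) (nrm : 'rV[R]_n -> R) (x y : 'rV[R]_n) : R :=
  nrm (x - y).

Definition cell (R : realType) (n : nat) (delta : R) (m : 'rV[int]_n) : set 'rV[R]_n :=
  [set x | forall j, (m ord0 j)%:~R * delta - delta / 2 <= x ord0 j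
                     /\ x ord0 j < (m ord0 j)%:~R * delta + delta / 2].

Definition grid (R : realType) (n : nat) (delta : R) : set 'rV[R]_n :=
  [set x | exists m : 'rV[int]_n, x = delta *: map_mx (fun z : int => z%:~R) m].

(* delta-roundoff: x~ = delta m where x in C_delta(m); the index m is
   m_j = floor (x_j / delta + 1/2), which is the unique m with x in C_delta(m). *)
Definition roundoff (R : realType) (n : nat) (delta : R) (x : 'rV[R]_n) : 'rV[R]_n :=
  delta *: \row_j ((Num.floor (x ord0 j / delta + 2^-1))%:~R : R).

Definition theta (R : realType) (n : nat) (nrm : 'rV[R]_n -> R) (delta : R) : R :=
  2^-1 * sup [set r : R | exists x y, [/\ cell delta 0 x, cell delta 0 y & r = dist nrm x y]].

Definition contraction (R : realType) (n : nat) (nrm : 'rV[R]_n -> R)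
    (w : 'rV[R]_n -> 'rV[R]_n) (lam : R) : Prop :=
  0 <= lam /\ lam < 1 /\ forall x y, dist nrm (w x) (w y) <= lam * dist nrm x y.

(* An orbit of the Markov chain generated by the IFS {R^n; w_i; q_i} started at x0,
   along the index sequence i (i k is the index chosen at step k >= 1; i 0 unused):
   every chosen index has positive probability. *)
Definition IFS_orbit (R : realType) (n N : nat) (w : 'I_N -> 'rV[R]_n -> 'rV[R]_n)
    (q : 'I_N -> R) (x0 : 'rV[R]_n) (i : nat -> 'I_N) (x : nat -> 'rV[R]_n) : Prop :=
  x 0%N = x0 /\ forall k, 0 < q (i k.+1) /\ x k.+1 = w (i k.+1) (x k).

Definition DIFS_orbit (R : realType) (n N : nat) (wt : 'I_N -> 'rV[R]_n -> 'rV[R]_n)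
    (p : 'I_N -> 'rV[R]_n -> R) (x0 : 'rV[R]_n) (i : nat -> 'I_N)
    (x : nat -> 'rV[R]_n) : Prop :=
  x 0%N = x0 /\ forall k, 0 < p (i k.+1) (x k) /\ x k.+1 = wt (i k.+1) (x k).

(* Given an index sequence, the orbit of one chain is produced by iterating the
   maps of the other along it; for the DIFS the chosen indices stay admissible
   because rounded points lie on the lattice.  The roundoff error [y - y~] has norm
   at most theta: its multiples [s (y - y~)], -1 < s <= 1, all lie in C_delta(0).
   Hence the distances [d_k] between the two orbits satisfy [d_0 = 0] and
   [d_(k+1) <= lammax d_k + theta], and stay below the fixed point
   [theta / (1 - lammax)] of this recursion. *)

From mathcomp Require Import all_boot all_order all_algebra.
From mathcomp Require Import all_classical all_reals.
From mathcomp Require Import ring lra.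
Set Implicit Arguments. Unset Strict Implicit. Unset Printing Implicit Defensive.

Import Order.TTheory GRing.Theory Num.Theory.
Local Open Scope ring_scope.
Local Open Scope classical_set_scope.

Section NormFacts.
Variables (R : realType) (n : nat) (nrm : 'rV[R]_n -> R).
Hypothesis nrmP : is_norm nrm.

Lemma nrm0 : nrm 0 = 0.
Proof. by case: nrmP => _ nrmZ _; rewrite -(scale0r 0) nrmZ normr0 mul0r. Qed.

Lemma nrm_ge0 x : 0 <= nrm x.
Proof.
case: nrmP => _ nrmZ nrmD.
have := nrmD x (- x); rewrite subrr nrm0 -scaleN1r nrmZ normrN normr1 mul1r.
lra.
Qed.

Lemma nrm_sum m (F : 'I_m -> 'rV[R]_n) : nrm (\sum_j F j) <= \sum_j nrm (F j).
Proof.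
case: nrmP => _ _ nrmD; elim/big_rec2: _ => [|j y z _ le_yz]; first by rewrite nrm0.
exact: le_trans (nrmD _ _) (lerD _ le_yz).
Qed.

Lemma nrm_le_sum_coord x : nrm x <= \sum_j `|x 0 j| * nrm 'e_j.
Proof.
case: nrmP => _ nrmZ _; rewrite {1}(row_sum_delta x).
by apply: le_trans (nrm_sum _) _; under eq_bigr do rewrite nrmZ.
Qed.

Lemma dist_ge0 x y : 0 <= dist nrm x y.
Proof. exact: nrm_ge0. Qed.

Lemma dist_triangle x y z : dist nrm x z <= dist nrm x y + dist nrm y z.
Proof. by case: nrmP => _ _ nrmD; rewrite /dist -(subrKA y) nrmD. Qed.

Lemma contractionW w lam mu :
  contraction nrm w lam -> lam <= mu < 1 -> contraction nrm w mu.
Proof.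
move=> [lam_ge0 [_ wP]] /andP[le_lam_mu mu_lt1]; split; first exact: le_trans le_lam_mu.
split=> // x y; apply: le_trans (wP x y) _.
exact: (ler_wpM2r (dist_ge0 x y) le_lam_mu).
Qed.

Lemma contraction_bigmax N (w : 'I_N -> 'rV[R]_n -> 'rV[R]_n) lam :
  (forall k, contraction nrm (w k) (lam k)) ->
  forall k, contraction nrm (w k) (\big[Num.max/0]_k lam k).
Proof.
move=> wP k; apply: contractionW (wP k) _; rewrite le_bigmax /=.
by apply: bigmax_lt => [|j _]; [exact: ltr01 | case: (wP j) => _ []].
Qed.

Lemma shadow_orbit_dist (f g : nat -> 'rV[R]_n -> 'rV[R]_n) lam eps
    (x y : nat -> 'rV[R]_n) :
  (forall k, contraction nrm (f k) lam) ->
  (forall k z, dist nrm (f k z) (g k z) <= eps) ->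
  x 0%N = y 0%N -> (forall k, x k.+1 = f k (x k)) -> (forall k, y k.+1 = g k (y k)) ->
  forall k, dist nrm (x k) (y k) <= eps / (1 - lam).
Proof.
move=> fP fgP xy0 xS yS; have [lam_ge0 [lam_lt1 _]] := fP 0%N.
have eps_ge0 : 0 <= eps := le_trans (dist_ge0 _ _) (fgP 0%N 0).
have bound_fix : lam * (eps / (1 - lam)) + eps = eps / (1 - lam).
  by field; rewrite subr_eq0 gt_eqF.
elim=> [|k IHk]; first by rewrite xy0 /dist subrr nrm0 divr_ge0 // subr_ge0 ltW.
rewrite xS yS -bound_fix; apply: le_trans (dist_triangle _ (f k (y k)) _) _.
apply: lerD (fgP _ _); case: (fP k) => _ [_ /(_ (x k) (y k)) le_f].
exact: le_trans le_f (ler_wpM2l lam_ge0 IHk).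
Qed.

End NormFacts.

Lemma roundoff_grid (R : realType) n (delta : R) (y : 'rV[R]_n) :
  grid delta (roundoff delta y).
Proof.
exists (\row_j Num.floor (y 0 j / delta + 2^-1)).
by congr (_ *: _); apply/rowP => j; rewrite !mxE.
Qed.

Lemma floor_roundoff_err (R : realType) (delta u : R) : 0 < delta ->
  - (delta / 2) <= u - delta * (Num.floor (u / delta + 2^-1))%:~R < delta / 2.
Proof.
move=> delta_gt0; set F : R := (Num.floor _)%:~R; set v := u / delta.
have F_le : F <= v + 2^-1 := floor_le _.
have F_gt : v + 2^-1 < F + 1 by rewrite /F -[1]/(1%:~R) -intrD floorD1_gt.
have lo : (F - 2^-1) * delta <= v * delta by apply: ler_wpM2r; lra.
have hi : v * delta < (F + 2^-1) * delta by rewrite ltr_pM2r //; lra.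
have -> : u = v * delta by rewrite mulfVK ?gt_eqF.
by apply/andP; split; lra.
Qed.

Lemma mulr_halfopen (R : realDomainType) (c a s : R) :
  - c <= a < c -> -1 < s <= 1 -> - c <= s * a < c.
Proof.
move=> /andP[a_ge a_lt] /andP[s_gt s_le]; apply/andP; split.
- have : 0 <= (1 + s) * (c + a) by apply: mulr_ge0; lra.
  have : 0 <= (1 - s) * (c - a) by apply: mulr_ge0; lra.
  nra.
- have : 0 <= (1 - s) * (a + c) by apply: mulr_ge0; lra.
  have : 0 < (1 + s) * (c - a) by apply: mulr_gt0; lra.
  nra.
Qed.

Lemma roundoff_err_cell (R : realType) n (delta : R) (y : 'rV[R]_n) s :
  0 < delta -> -1 < s <= 1 -> cell delta 0 (s *: (y - roundoff delta y)).
Proof.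
move=> delta_gt0 s_bounds j; rewrite !mxE mul0r sub0r add0r.
by apply/andP; apply: mulr_halfopen s_bounds; apply: floor_roundoff_err.
Qed.

Lemma ler_twice (R : realFieldType) (a b : R) :
  (forall t, 1 <= t < 2 -> t * a <= b) -> 2 * a <= b.
Proof.
move=> le_b; rewrite leNgt; apply/negP => lt_b.
have a_le_b : a <= b by rewrite -[a]mul1r; apply: le_b; apply/andP; split; lra.
have a_gt0 : 0 < a by lra.
have t_bounds : 1 <= 1 + b / (2 * a) < 2.
  rewrite lerDl -ltrBrDl divr_ge0 ?ltr_pdivrMr /=; lra.
have := le_b _ t_bounds.
have -> : (1 + b / (2 * a)) * a = a + b / 2 by field; rewrite gt_eqF.
lra.
Qed.

Section Roundoff.
Variables (R : realType) (n : nat) (nrm : 'rV[R]_n -> R) (delta : R).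
Hypotheses (nrmP : is_norm nrm) (delta_gt0 : 0 < delta).

Lemma cell0_dist_bounded : has_ubound [set r : R | exists x y,
    [/\ cell delta 0 x, cell delta 0 y & r = dist nrm x y]].
Proof.
exists (\sum_j delta * nrm 'e_j) => _ [x [y [x_cell y_cell ->]]].
apply: le_trans (nrm_le_sum_coord nrmP _) _; apply: ler_sum => j _.
apply: ler_wpM2r; first exact: nrm_ge0.
move: (x_cell j) (y_cell j); rewrite !mxE mul0r !sub0r !add0r => -[? ?] [? ?].
by rewrite ler_norml; apply/andP; split; lra.
Qed.

(* [z] and [(1 - t) z] lie in the cell at distance [t * nrm z], for every [1 <= t < 2]. *)
Lemma roundoff_err_le_theta y : dist nrm y (roundoff delta y) <= theta nrm delta.
Proof.
case: nrmP => _ nrmZ _; set z := y - roundoff delta y.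
rewrite /theta ler_pdivlMl //; apply: ler_twice => t /andP[t_ge1 t_lt2].
apply: (ub_le_sup cell0_dist_bounded).
exists (1 *: z), ((1 - t) *: z); split; try apply: roundoff_err_cell => //; try lra.
rewrite /dist -scalerBl nrmZ.
have -> : 1 - (1 - t) = t by ring.
by rewrite ger0_norm //; lra.
Qed.

End Roundoff.

Lemma DIFS_orbit_iteri (R : realType) n N (delta : R)
    (wt : 'I_N -> 'rV[R]_n -> 'rV[R]_n) p x0 (i : nat -> 'I_N) :
  grid delta x0 -> (forall k y, grid delta (wt k y)) ->
  (forall k x, grid delta x -> 0 < p k x) ->
  DIFS_orbit wt p x0 i (fun k => iteri k (fun j => wt (i j.+1)) x0).
Proof.
move=> x0_grid wt_grid p_gt0; split=> // k; split=> //.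
by apply: p_gt0; case: k => [|k] //=; apply: wt_grid.
Qed.

Lemma IFS_orbit_iteri (R : realType) n N (w : 'I_N -> 'rV[R]_n -> 'rV[R]_n) q x0
    (i : nat -> 'I_N) :
  (forall k, 0 < q k) -> IFS_orbit w q x0 i (fun k => iteri k (fun j => w (i j.+1)) x0).
Proof. by move=> q_gt0; split. Qed.

Theorem lemma6 (R : realType) (n N : nat) (nrm : 'rV[R]_n -> R) (delta : R)
    (w : 'I_N -> 'rV[R]_n -> 'rV[R]_n) (lam : 'I_N -> R)
    (p : 'I_N -> 'rV[R]_n -> R) (q : 'I_N -> R) (x0 : 'rV[R]_n) :
  is_norm nrm -> 0 < delta ->
  (forall k, contraction nrm (w k) (lam k)) ->
  (* the DIFS on D^n(delta): probabilities p_i : D^n(delta) -> (0,1], summing to 1 *)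
  (forall k x, grid delta x -> 0 < p k x <= 1) ->
  (forall x, grid delta x -> \sum_k p k x = 1) ->
  (* the IFS: constant probabilities q_i in (0,1], summing to 1 *)
  (forall k, 0 < q k <= 1) -> \sum_k q k = 1 ->
  grid delta x0 ->
  let wt := fun k x => roundoff delta (w k x) in
  let lammax := \big[Num.max/0]_k lam k in
  (forall (i : nat -> 'I_N) (x : nat -> 'rV[R]_n), IFS_orbit w q x0 i x ->
     exists xt : nat -> 'rV[R]_n, DIFS_orbit wt p x0 i xt /\
       forall k, dist nrm (x k) (xt k) <= theta nrm delta / (1 - lammax))
  /\
  (forall (i : nat -> 'I_N) (xt : nat -> 'rV[R]_n), DIFS_orbit wt p x0 i xt ->
     exists x : nat -> 'rV[R]_n, IFS_orbit w q x0 i x /\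
       forall k, dist nrm (x k) (xt k) <= theta nrm delta / (1 - lammax)).
Proof.
move=> nrmP delta_gt0 wP pP _ qP _ x0_grid wt lammax.
have wmaxP : forall k, contraction nrm (w k) lammax := contraction_bigmax nrmP wP.
have errP k y : dist nrm (w k y) (wt k y) <= theta nrm delta.
  exact: roundoff_err_le_theta.
split=> i;
  have shadow := shadow_orbit_dist nrmP (fun k => wmaxP (i k.+1)) (fun k => errP (i k.+1)).
- move=> x [x0E xS]; exists (fun k => iteri k (fun j => wt (i j.+1)) x0); split.
    apply: DIFS_orbit_iteri x0_grid _ _ => [k y | k y /(pP k y) /andP[] //].
    exact: roundoff_grid.
  by apply: shadow => // k; case: (xS k).
- move=> xt [xt0E xtS]; exists (fun k => iteri k (fun j => w (i j.+1)) x0); split.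
    by apply: IFS_orbit_iteri => k; case/andP: (qP k).
  by apply: shadow => // k; case: (xtS k).
Qed.
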